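(* Let $S\subseteq\mathbb{R}^n$ be a differential subspace and $x\in S$. Let $R(S)=\{f|_S\colon f\in C^\infty(\mathbb{R}^n)\}$. Then every derivation of $R(S)$ at $x$ extends to a unique derivation of $C^\infty(S)$ at $x$.
   Context: For $S\subseteq\mathbb{R}^n$, $C^\infty(S)$ consists of functions $f\colon S\to\mathbb{R}$ such that for each $x\in S$ there is a neighbourhood $U$ of $x$ in $\mathbb{R}^n$ and $f_x\in C^\infty(\mathbb{R}^n)$ with $f|_{U\cap S}=f_x|_{U\cap S}$; $R(S)\subseteq C^\infty(S)$. For a ring $A$ of real functions on $S$ (here $A=R(S)$ or $C^\infty(S)$), a derivation of $A$ at $x$ is a linear map $u\colon A\to\mathbb{R}$ satisfying $u(fh)=u(f)h(x)+f(x)u(h)$ for all $f,h\in A$. *)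

From HB Require Import structures.
From mathcomp Require Import all_boot all_order all_algebra.
From mathcomp Require Import all_classical all_reals all_analysis.
Unset Printing Implicit Defensive.
Import Order.TTheory GRing.Theory Num.Theory.
Import numFieldNormedType.Exports.
Local Open Scope classical_set_scope.
Local Open Scope ring_scope.

Fixpoint Ck {R : realType} {n : nat} (k : nat) (f : 'rV[R]_n -> R) : Prop :=
  match k with
  | 0%N => True
  | k'.+1 => (forall x, differentiable f x) /\
             (forall v : 'rV[R]_n, Ck k' (fun x => 'd f x v))
  end.

Definition smooth {R : realType} {n : nat} (f : 'rV[R]_n -> R) : Prop :=
  forall k, Ck k f.

Definition pts {R : realType} {n : nat} (S : set 'rV[R]_n) := {x : 'rV[R]_n | S x}.

Definition RS {R : realType} {n : nat} (S : set 'rV[R]_n) (f : pts S -> R) : Prop :=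
  exists g : 'rV[R]_n -> R, smooth g /\ forall y : pts S, f y = g (sval y).

Definition CinfS {R : realType} {n : nat} (S : set 'rV[R]_n) (f : pts S -> R) : Prop :=
  forall x : pts S, exists U : set 'rV[R]_n, nbhs (sval x) U /\
    exists g : 'rV[R]_n -> R, smooth g /\
      forall y : pts S, U (sval y) -> f y = g (sval y).

Definition derivation_at {R : realType} {n : nat} {S : set 'rV[R]_n}
    (A : (pts S -> R) -> Prop) (x : pts S) (u : (pts S -> R) -> R) : Prop :=
  (forall f h, A f -> A h -> u (fun y => f y + h y) = u f + u h) /\
  (forall (a : R) f, A f -> u (fun y => a * f y) = a * u f) /\
  (forall f h, A f -> A h -> u (fun y => f y * h y) = u f * h x + f x * u h).

(* Near x, every f in C^oo(S) agrees with a globally smooth g; multiplying by a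
   smooth bump psi with psi x = 1 supported in that neighbourhood gives h := psi g
   and p := psi in R(S) with f p = h on S.  The Leibniz rule then forces any
   extension v of u to satisfy u h = v f + f x * u p, i.e. v f = u h - f x * u p.
   This value does not depend on the choice of (h, p), and it defines the
   extension. *)
From HB Require Import structures.
From mathcomp Require Import all_boot all_order all_algebra.
From mathcomp Require Import all_classical all_reals all_analysis.
From mathcomp Require Import ring lra.
Set Implicit Arguments.
Unset Strict Implicit.
Unset Printing Implicit Defensive.
Import Order.TTheory GRing.Theory Num.Theory.
Import numFieldNormedType.Exports.
Local Open Scope classical_set_scope.
Local Open Scope ring_scope.

(* [Ck], generalised to any normed domain so that it also covers R -> R. *)
Fixpoint diffn {R : realType} {V : normedModType R} (k : nat) (f : V -> R) : Prop :=
  match k with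
  | 0%N => True
  | k'.+1 => (forall x, differentiable f x) /\
             (forall v : V, diffn k' (fun x => 'd f x v))
  end.

Lemma Ck_diffnE (R : realType) n k (f : 'rV[R]_n -> R) : Ck k f <-> diffn k f.
Proof.
elim: k f => [//|k IH] f /=; split => -[d H]; split => // v; apply/IH; exact: H.
Qed.

Lemma smooth_diffnE (R : realType) n (f : 'rV[R]_n -> R) :
  smooth f <-> forall k, diffn k f.
Proof. by split => H k; apply/Ck_diffnE; exact: H. Qed.

Section DiffnClosure.
Variables (R : realType) (V : normedModType R).
Implicit Types (f g : V -> R) (k : nat).

Lemma diffnW k f : diffn k.+1 f -> diffn k f.
Proof. by elim: k f => [//|k IH] f [df Hf]; split => // v; exact: IH. Qed.

Lemma diffn_cst k (c : R) : diffn k (fun _ : V => c).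
Proof.
elim: k c => [//|k IH] c; split => [x|v]; first exact: differentiable_cst.
have -> : (fun x => 'd (fun _ : V => c) x v) = (fun _ => 0).
  by apply/funext => x; rewrite (diff_cst (V:=V) (W:=R) c x).
exact: IH.
Qed.

Lemma diffnD k f g : diffn k f -> diffn k g -> diffn k (fun x => f x + g x).
Proof.
elim: k f g => [//|k IH] f g [df Hf] [dg Hg]; split => [x|v].
  exact: differentiableD.
have -> : (fun x => 'd (fun y => f y + g y) x v) = (fun x => 'd f x v + 'd g x v).
  by apply/funext => x; rewrite (diffD (df x) (dg x)).
by apply: IH; [exact: Hf | exact: Hg].
Qed.

Lemma diffnM k f g : diffn k f -> diffn k g -> diffn k (fun x => f x * g x).
Proof.
elim: k f g => [//|k IH] f g Df Dg; have [df Hf] := Df; have [dg Hg] := Dg.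
split => [x|v]; first exact: differentiableM.
have -> : (fun x => 'd (fun y => f y * g y) x v) =
    (fun x => f x * 'd g x v + g x * 'd f x v).
  by apply/funext => x; rewrite (diffM (df x) (dg x)).
by apply: diffnD; apply: IH; by [exact: diffnW | exact: Hf | exact: Hg].
Qed.

Lemma diffn_sum k (I : Type) (s : seq I) (F : I -> V -> R) :
  (forall i, diffn k (F i)) -> diffn k (fun y => \sum_(i <- s) F i y).
Proof.
move=> HF; elim: s => [|a s IH].
  by under eq_fun do rewrite big_nil; exact: diffn_cst.
by under eq_fun do rewrite big_cons; exact: diffnD.
Qed.

Lemma diffn_comp k (th : R -> R) f :
  diffn k th -> diffn k f -> diffn k (fun x => th (f x)).
Proof.
elim: k th f => [//|k IH] th f Dth Df; have [dth Hth] := Dth; have [df Hf] := Df.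
split => [x|v]; first exact: differentiable_comp.
have -> : (fun x => 'd (fun y => th (f y)) x v) =
    (fun x => 'd f x v * 'd th (f x) 1).
  apply/funext => x; rewrite (diff_comp (df x) (dth (f x))) /=.
  by rewrite -[in LHS](mulr1 ('d f x v)) -[X in 'd th _ X]/('d f x v *: (1 : R))
     linearZ.
apply: diffnM; first exact: Hf.
by apply: (IH (fun t => 'd th t 1)); [exact: Hth | exact: diffnW].
Qed.

Lemma diffn_linear k (f : {linear V -> R}) : continuous f -> diffn k f.
Proof.
case: k => [//|k] cf; split => [x|v]; first exact: linear_differentiable.
have -> : (fun x => 'd f x v) = (fun _ => f v).
  by apply/funext => x; rewrite diff_lin.
exact: diffn_cst.
Qed.

End DiffnClosure.

Lemma diffn_coord (R : realType) n k (i : 'I_n) :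
  diffn k (fun y : 'rV[R]_n => y ord0 i).
Proof.
have @f : {linear 'rV[R]_n -> R}.
  by exists (fun N : 'rV[R]_n => N ord0 i); do 2![eexists]; do ?[constructor];
     rewrite ?mxE// => ? *; rewrite ?mxE//; move=> ?; rewrite !mxE.
by rewrite (_ : (fun _ => _) = f) //; apply: diffn_linear; exact: coord_continuous.
Qed.

Section Flat.
Variable R : realType.
Implicit Types (m : nat) (t : R).

Definition flat m t : R := if 0 < t then (t^-1) ^+ m * expR (- t^-1) else 0.

(* On t > 0, (t^-m e^(-1/t))' = - m t^-(m+1) e^(-1/t) + t^-(m+2) e^(-1/t), so the
   family [flat] is closed under differentiation. *)
Definition flat_deriv m t : R := - m%:R * flat m.+1 t + flat m.+2 t.

Lemma flat_le0 m t : t <= 0 -> flat m t = 0.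
Proof. by move=> t0; rewrite /flat ltNge t0. Qed.

Lemma is_derive_flat_gt0 m t : 0 < t -> is_derive t 1 (flat m) (flat_deriv m t).
Proof.
move=> t0.
have Hinv : is_derive t 1 (fun s : R => s^-1) (- t ^- 2).
  apply: is_derive_eq; first exact: (is_deriveV (lt0r_neq0 t0) (is_derive_id _ _)).
  by rewrite /= scaler1.
apply: (@near_eq_is_derive _ _ _
    ((fun s : R => s^-1) ^+ m * (expR \o (fun s : R => - s^-1)))).
  by near=> s; rewrite /flat ifT ?fctE //; near: s; exact: lt_nbhsr.
apply: is_derive_eq.
rewrite /flat_deriv /flat !ifT // !fctE -exprVn /=.
have sc (a b : R) : a *: b = a * b by [].
by case: m => [|m]; rewrite /= ?expr0 ?exprS ?expr2 ?expr0 /= ?mulr0n ?sc; ring.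
Unshelve. all: by end_near.
Qed.

Lemma is_derive_flat_lt0 m t : t < 0 -> is_derive t 1 (flat m) (flat_deriv m t).
Proof.
move=> t0; apply: (@near_eq_is_derive _ _ _ (cst 0)).
  by near=> s; rewrite flat_le0 //; apply: ltW; near: s; exact: lt_nbhsl.
by apply: is_derive_eq; rewrite /flat_deriv !flat_le0 ?ltW //; ring.
Unshelve. all: by end_near.
Qed.

(* From e^s >= s^(m+2)/(m+2)!, with s = 1/h. *)
Lemma norm_flat_div_le m (h : R) : `|h^-1 * flat m h| <= (m.+2)`!%:R * `|h|.
Proof.
have K0 : 0 < (m.+2)`!%:R :> R by rewrite ltr0n fact_gt0.
have [h0|h0] := ltP 0 h; last by rewrite flat_le0 // mulr0 normr0 mulr_ge0.
rewrite /flat ifT // (gtr0_norm h0); set s := h^-1.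
have s0 : 0 < s by rewrite invr_gt0.
have -> : h = s^-1 by rewrite invrK.
clearbody s.
have E0 : 0 < expR s := expR_gt0 s.
have sn0 : s != 0 by rewrite lt0r_neq0.
have En0 : expR s != 0 by rewrite lt0r_neq0.
have exp_ge : s ^+ m.+2 <= expR s * (m.+2)`!%:R.
  rewrite -ler_pdivrMr //; apply: le_trans (expR_ge1Dxn m.+1 (ltW s0)).
  by rewrite lerDr.
rewrite expRN ger0_norm; last by rewrite !mulr_ge0 ?exprn_ge0 ?invr_ge0 ?ltW.
have -> : s * (s ^+ m * (expR s)^-1) = s ^+ m.+2 * ((expR s)^-1 * s^-1).
  by rewrite !exprS; move: (s ^+ m) => p; field; rewrite sn0 En0.
have -> : (m.+2)`!%:R * s^-1 = (expR s * (m.+2)`!%:R) * ((expR s)^-1 * s^-1).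
  by field; rewrite sn0 En0.
by apply: ler_wpM2r => //; rewrite mulr_ge0 ?invr_ge0 ?ltW.
Qed.

Lemma is_derive_flat0 m : is_derive (0 : R) 1 (flat m) (flat_deriv m 0).
Proof.
have flat0 k : flat k 0 = 0 by rewrite flat_le0.
have K0 : 0 < (m.+2)`!%:R :> R by rewrite ltr0n fact_gt0.
have Hc : (fun h : R => h^-1 *: ((flat m \o shift 0) (h *: 1) - flat m 0))
    @ (0 : R)^' --> (0 : R).
  apply/cvgr0Pnorm_lt => eps eps0.
  near=> h; rewrite /= flat0 subr0 addr0 [_%:A]mulr1 -[_ *: _]/(_ * _).
  apply: le_lt_trans (norm_flat_div_le m h) _; rewrite -ltr_pdivlMl //.
  by near: h; apply: dnbhs0_lt; rewrite mulr_gt0 ?invr_gt0.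
rewrite /flat_deriv !flat0 mulr0 addr0.
apply: DeriveDef; first by apply/cvg_ex; exists 0.
exact: cvg_lim Hc.
Unshelve. all: by end_near.
Qed.

Lemma is_derive_flat m t : is_derive t 1 (flat m) (flat_deriv m t).
Proof.
have [t0|t0|->] := ltgtP t 0;
  [exact: is_derive_flat_lt0 | exact: is_derive_flat_gt0 | exact: is_derive_flat0].
Qed.

Lemma diff_flat m t v : differentiable (flat m) t /\ 'd (flat m) t v = v * flat_deriv m t.
Proof.
have [dG vG] := is_derive_flat m t.
split; first exact/derivable1_diffP.
by rewrite (deriv1E dG) /= derive1E vG.
Qed.

Lemma diffn_flat k m : diffn k (flat m).
Proof.
elim: k m => [//|k IH] m; split => [t|v]; first by case: (diff_flat m t 0).
have -> : (fun t => 'd (flat m) t v) =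
    (fun t => v * ((- m%:R) * flat m.+1 t + flat m.+2 t)).
  by apply/funext => t; case: (diff_flat m t v).
by apply: diffnM; [exact: diffn_cst | apply: diffnD => //; apply: diffnM => //;
  exact: diffn_cst].
Qed.

End Flat.

(* psi y = flat 0 (e^2 - |y - a|^2) / flat 0 (e^2), with the Euclidean norm
   written out in coordinates. *)
Lemma smooth_bump (R : realType) n (a : 'rV[R]_n) (U : set 'rV[R]_n) :
  nbhs a U -> exists psi, smooth psi /\ psi a = 1 /\ forall y, ~ U y -> psi y = 0.
Proof.
move/nbhs_ballP => [e /= e0 HU].
pose sq (y : 'rV[R]_n) i := (y ord0 i + (-1) * a ord0 i) * (y ord0 i + (-1) * a ord0 i).
pose q y := \sum_(i < n) sq y i.
have flat_pos : 0 < flat 0 (e * e).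
  by rewrite /flat ifT; [rewrite expr0 mul1r expR_gt0 | exact: mulr_gt0].
exists (fun y => flat 0 (e * e + (-1) * q y) * (flat 0 (e * e))^-1).
split; last split.
- apply/smooth_diffnE => k; apply: diffnM; last exact: diffn_cst.
  apply: diffn_comp; first exact: diffn_flat.
  apply: diffnD; first exact: diffn_cst.
  apply: diffnM; first exact: diffn_cst.
  apply: diffn_sum => i; apply: diffnM;
    by apply: diffnD; [exact: diffn_coord | apply: diffnM; exact: diffn_cst].
- have -> : q a = 0 by rewrite /q big1 // => i _; rewrite /sq mulN1r subrr mulr0.
  by rewrite mulr0 addr0 mulfV // lt0r_neq0.
- move=> y nU; rewrite flat_le0 ?mul0r //.
  rewrite mulN1r subr_le0 leNgt; apply/negP => qlt.
  apply: nU; apply: HU; split => // i j; rewrite ord1 /=.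
  have : sq y j < e * e.
    apply: le_lt_trans qlt; rewrite /q (bigD1 j) //= lerDl.
    by apply: sumr_ge0 => k _; rewrite /sq -expr2 sqr_ge0.
  rewrite /sq mulN1r => Hd.
  by rewrite -ball_normE /= ltr_norml; apply/andP; split; nra.
Qed.

Section RestrictionRing.
Variables (R : realType) (n : nat) (S : set 'rV[R]_n).

Lemma RS_cst (c : R) : RS S (fun _ => c).
Proof.
by exists (fun _ => c); split => //; apply/smooth_diffnE => k; exact: diffn_cst.
Qed.

Lemma RS_smooth (g : 'rV[R]_n -> R) : smooth g -> RS S (fun y => g (sval y)).
Proof. by exists g. Qed.

Lemma RSD f h : RS S f -> RS S h -> RS S (fun y => f y + h y).
Proof.
move=> [g1 [/smooth_diffnE s1 e1]] [g2 [/smooth_diffnE s2 e2]].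
exists (fun y => g1 y + g2 y); split; last by move=> y; rewrite e1 e2.
by apply/smooth_diffnE => k; exact: diffnD.
Qed.

Lemma RSM f h : RS S f -> RS S h -> RS S (fun y => f y * h y).
Proof.
move=> [g1 [/smooth_diffnE s1 e1]] [g2 [/smooth_diffnE s2 e2]].
exists (fun y => g1 y * g2 y); split; last by move=> y; rewrite e1 e2.
by apply/smooth_diffnE => k; exact: diffnM.
Qed.

Lemma RS_CinfS f : RS S f -> CinfS S f.
Proof. by move=> [g [sg eg]] x; exists setT; split; [exact: filterT | exists g]. Qed.

Variable x : pts S.

Definition quotient_at (f h p : pts S -> R) :=
  [/\ RS S h, RS S p, p x = 1 & forall y, f y * p y = h y].

Lemma quotient_at_pt f h p : quotient_at f h p -> h x = f x.
Proof. by move=> [_ _ px fph]; rewrite -fph px mulr1. Qed.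

Lemma CinfS_quotient_at f : CinfS S f -> exists h p, quotient_at f h p.
Proof.
move=> /(_ x) [U [nU [g [sg eg]]]].
have [psi [spsi [psi1 psi0]]] := smooth_bump nU.
exists (fun y => psi (sval y) * g (sval y)), (fun y => psi (sval y)); split => //.
- by apply: RSM; exact: RS_smooth.
- exact: RS_smooth.
- move=> y; have [Uy|nUy] := pselect (U (sval y)); first by rewrite eg // mulrC.
  by rewrite psi0 // mulr0 mul0r.
Qed.

Lemma RS_quotient_at f : RS S f -> quotient_at f f (fun _ => 1).
Proof. by move=> Rf; split => // [|y]; [exact: RS_cst | rewrite mulr1]. Qed.

Lemma quotient_atD f1 f2 h1 p1 h2 p2 :
  quotient_at f1 h1 p1 -> quotient_at f2 h2 p2 ->
  quotient_at (fun y => f1 y + f2 y)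
    (fun y => h1 y * p2 y + h2 y * p1 y) (fun y => p1 y * p2 y).
Proof.
move=> [Rh1 Rp1 p1x e1] [Rh2 Rp2 p2x e2]; split.
- by apply: RSD; exact: RSM.
- exact: RSM.
- by rewrite p1x p2x mulr1.
- by move=> y; rewrite -e1 -e2; ring.
Qed.

Lemma quotient_atM f1 f2 h1 p1 h2 p2 :
  quotient_at f1 h1 p1 -> quotient_at f2 h2 p2 ->
  quotient_at (fun y => f1 y * f2 y) (fun y => h1 y * h2 y) (fun y => p1 y * p2 y).
Proof.
move=> [Rh1 Rp1 p1x e1] [Rh2 Rp2 p2x e2]; split.
- exact: RSM.
- exact: RSM.
- by rewrite p1x p2x mulr1.
- by move=> y; rewrite -e1 -e2; ring.
Qed.

Lemma quotient_atZ (a : R) f h p :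
  quotient_at f h p -> quotient_at (fun y => a * f y) (fun y => a * h y) p.
Proof.
move=> [Rh Rp px e]; split => // [|y]; first by apply: RSM => //; exact: RS_cst.
by rewrite -e mulrA.
Qed.

End RestrictionRing.

Section Extension.
Variables (R : realType) (n : nat) (S : set 'rV[R]_n) (x : pts S).
Variable u : (pts S -> R) -> R.
Hypothesis du : derivation_at (RS S) x u.

Lemma derivation_cst1 : u (fun _ => 1) = 0.
Proof.
have [_ [_ uM]] := du.
have := uM _ _ (RS_cst S 1) (RS_cst S 1).
rewrite (_ : (fun _ => _) = (fun _ => 1)); last by apply/funext => y; rewrite mulr1.
by rewrite mulr1 mul1r => H; lra.
Qed.

Definition extension_val (f h p : pts S -> R) := u h - f x * u p.

Lemma extension_val_unique f h1 p1 h2 p2 :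
  quotient_at x f h1 p1 -> quotient_at x f h2 p2 ->
  extension_val f h1 p1 = extension_val f h2 p2.
Proof.
move=> q1 q2; have hx1 := quotient_at_pt q1; have hx2 := quotient_at_pt q2.
case: q1 => Rh1 Rp1 p1x e1; case: q2 => Rh2 Rp2 p2x e2.
have [_ [_ uM]] := du.
have cross : (fun y => h1 y * p2 y) = (fun y => h2 y * p1 y).
  by apply/funext => y; rewrite -e1 -e2 mulrAC.
have := uM _ _ Rh1 Rp2; rewrite cross uM // /extension_val p1x p2x hx1 hx2 !mulr1.
by move=> H; lra.
Qed.

Definition extension (f : pts S -> R) : R :=
  if pselect (exists hp : (pts S -> R) * (pts S -> R), quotient_at x f hp.1 hp.2)
  is left e then extension_val f (projT1 (cid e)).1 (projT1 (cid e)).2 else 0.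

Lemma extensionE f h p : quotient_at x f h p -> extension f = extension_val f h p.
Proof.
move=> q; rewrite /extension; case: pselect => [e|[]]; last by exists (h, p).
by apply: extension_val_unique q; exact: (projT2 (cid e)).
Qed.

Lemma extension_RS f : RS S f -> extension f = u f.
Proof.
move=> Rf; rewrite (extensionE (RS_quotient_at x Rf)) /extension_val.
by rewrite derivation_cst1 mulr0 subr0.
Qed.

Lemma derivation_extension : derivation_at (CinfS S) x extension.
Proof.
have [uD [uZ uM]] := du.
split; [|split].
- move=> f1 f2 /(CinfS_quotient_at x) [h1 [p1 q1]] /(CinfS_quotient_at x) [h2 [p2 q2]].
  rewrite (extensionE (quotient_atD q1 q2)) (extensionE q1) (extensionE q2).
  have hx1 := quotient_at_pt q1; have hx2 := quotient_at_pt q2.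
  case: q1 q2 => Rh1 Rp1 p1x _ [Rh2 Rp2 p2x _].
  rewrite /extension_val uD; try exact: RSM.
  by rewrite !uM // p1x p2x hx1 hx2; ring.
- move=> a f /(CinfS_quotient_at x) [h [p q]].
  rewrite (extensionE (quotient_atZ a q)) (extensionE q).
  by case: q => Rh _ _ _; rewrite /extension_val uZ //; ring.
- move=> f1 f2 /(CinfS_quotient_at x) [h1 [p1 q1]] /(CinfS_quotient_at x) [h2 [p2 q2]].
  rewrite (extensionE (quotient_atM q1 q2)) (extensionE q1) (extensionE q2).
  have hx1 := quotient_at_pt q1; have hx2 := quotient_at_pt q2.
  case: q1 q2 => Rh1 Rp1 p1x _ [Rh2 Rp2 p2x _].
  by rewrite /extension_val !uM // p1x p2x hx1 hx2; ring.
Qed.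

Lemma extension_unique w f :
  derivation_at (CinfS S) x w -> (forall g, RS S g -> w g = u g) ->
  CinfS S f -> w f = extension f.
Proof.
move=> [_ [_ wM]] wu Cf; have [h [p q]] := CinfS_quotient_at x Cf.
rewrite (extensionE q); have hx := quotient_at_pt q; case: q => Rh Rp px e.
have := wM _ _ Cf (RS_CinfS Rp).
rewrite (_ : (fun y => f y * p y) = h); last by apply/funext => y; rewrite e.
by rewrite (wu _ Rh) (wu _ Rp) px mulr1 /extension_val => H; lra.
Qed.

End Extension.

Theorem mainTheorem3 (R : realType) (n : nat) (S : set 'rV[R]_n) (x : pts S)
    (u : (pts S -> R) -> R) :
  derivation_at (RS S) x u ->
  (exists v : (pts S -> R) -> R,
      derivation_at (CinfS S) x v /\ (forall f, RS S f -> v f = u f)) /\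
  (forall v1 v2 : (pts S -> R) -> R,
      derivation_at (CinfS S) x v1 -> (forall f, RS S f -> v1 f = u f) ->
      derivation_at (CinfS S) x v2 -> (forall f, RS S f -> v2 f = u f) ->
      forall f, CinfS S f -> v1 f = v2 f).
Proof.
move=> du; split.
  by exists (extension x u); split; [exact: derivation_extension | exact: extension_RS].
move=> v1 v2 d1 e1 d2 e2 f Cf.
by rewrite (extension_unique du d1 e1 Cf) (extension_unique du d2 e2 Cf).
Qed.
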